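(* Let $n\ge2$ and let $\varphi:\Delta_n^\circ\to\mathbb{R}$ be a regular exponentially concave function. The following are equivalent: (i) $L_\varphi$ is perturbation invariant: $L_\varphi(\mathbf{q}\oplus\mathbf{h}\,\|\,\mathbf{p}\oplus\mathbf{h})=L_\varphi(\mathbf{q}\,\|\,\mathbf{p})$ for all $\mathbf{p},\mathbf{q},\mathbf{h}\in\Delta_n^\circ$; (ii) there exist $\boldsymbol{\pi}\in\Delta_n^\circ$ and $c\in\mathbb{R}$ such that $\varphi(\mathbf{p})=-H^\times(\boldsymbol{\pi}\|\mathbf{p})+c=\sum_{i=1}^n\pi_i\log p_i+c$ for all $\mathbf{p}\in\Delta_n^\circ$.
   Context: $\Delta_n^\circ=\{\mathbf{x}\in(0,1]^n:\sum_ix_i=1\}$. Perturbation: $\mathbf{p}\oplus\mathbf{h}=(p_ih_i/\sum_jp_jh_j)_{i}$. Cross-entropy: $H^\times(\mathbf{p}\|\mathbf{q})=-\sum_ip_i\log q_i$. $\varphi$ is exponentially concave if $\Phi=e^\varphi$ is concave on $\Delta_n^\circ$; it is regular if moreover it is $C^4$ on $\Delta_n^\circ$ and $\frac{d^2}{dt^2}\big|_{t=0}\Phi(\mathbf{p}+t\mathbf{v})<0$ for every $\mathbf{p}\in\Delta_n^\circ$ and every nonzero $\mathbf{v}\in\mathbb{R}^n$ with $\sum_iv_i=0$. The logarithmic divergence is $L_\varphi(\mathbf{q}\|\mathbf{p})=\log\big(1+\nabla_{\mathbf{q}-\mathbf{p}}\varphi(\mathbf{p})\big)-(\varphi(\mathbf{q})-\varphi(\mathbf{p}))$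 for $\mathbf{p},\mathbf{q}\in\Delta_n^\circ$, where $\nabla_{\mathbf{v}}\varphi(\mathbf{p})=\frac{d}{dt}\varphi(\mathbf{p}+t\mathbf{v})|_{t=0}$. *)

From HB Require Import structures.
From mathcomp Require Import all_boot all_order all_algebra.
From mathcomp Require Import all_classical all_reals all_analysis.
Set Implicit Arguments. Unset Strict Implicit. Unset Printing Implicit Defensive.
Import Order.TTheory GRing.Theory Num.Theory.
Import numFieldNormedType.Exports.
Local Open Scope ring_scope.
Local Open Scope classical_set_scope.

Section Defs.
Variables (R : realType) (n : nat).
Notation vec := 'rV[R]_n.

Definition osimplex : set vec :=
  [set x | (forall i, 0 < x ord0 i <= 1) /\ \sum_(i < n) x ord0 i = 1].

Definition tangent : set vec := [set v | \sum_(i < n) v ord0 i = 0].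

Definition dirder (f : vec -> R) (v : vec) (p : vec) : R := 'D_v f p.

(* C^k on the open simplex, via iterated directional derivatives along
   tangent directions (equivalent to the usual C^k on the relatively open
   set Delta_n^o of the affine hyperplane). *)
Fixpoint Ck_simplex (k : nat) (f : vec -> R) : Prop :=
  match k with
  | 0 => {within osimplex, continuous f}
  | k'.+1 => {within osimplex, continuous f} /\
      (forall p v, osimplex p -> tangent v -> derivable f p v) /\
      (forall v, tangent v -> Ck_simplex k' (dirder f v))
  end.

Definition exp_concave (phi : vec -> R) : Prop :=
  forall p q t, osimplex p -> osimplex q -> 0 <= t <= 1 ->
    (1 - t) * expR (phi p) + t * expR (phi q)
      <= expR (phi ((1 - t) *: p + t *: q)).

Definition regular_exp_concave (phi : vec -> R) : Prop :=
  exp_concave phi /\ Ck_simplex 4 phi /\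
  (forall p v, osimplex p -> tangent v -> v != 0 ->
     (fun t : R => expR (phi (p + t *: v)))^`(2) 0 < 0).

Definition logdiv (phi : vec -> R) (q p : vec) : R :=
  ln (1 + dirder phi (q - p) p) - (phi q - phi p).

Definition perturb (p h : vec) : vec :=
  \row_(i < n) (p ord0 i * h ord0 i / \sum_(j < n) p ord0 j * h ord0 j).

Definition cross_entropy (p q : vec) : R :=
  - \sum_(i < n) p ord0 i * ln (q ord0 i).

End Defs.

(* (ii) => (i): for [phi = sum_i pi_i ln p_i + c] the logarithmic divergence is
   [ln (sum_i pi_i q_i / p_i) - sum_i pi_i ln (q_i / p_i)], and perturbing both
   arguments by [h] multiplies every ratio [q_i / p_i] by the same constant,
   which cancels.

   (i) => (ii): exponential concavity makes [v |-> D_v phi p] linear and gives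
   the tangent inequality [Phi y <= Phi x (1 + D_(y-x) phi x)] for
   [Phi = exp o phi], so [exp L_phi (y || x)] is the tangent of [Phi] at [x],
   evaluated at [y], divided by [Phi y]. Along a segment [[x, y]] both
   endpoint tangents are affine, and invariance makes them proportional to the
   corresponding affine maps on the perturbed segment, with the common factor
   [m y = Phi (y (+) h) <y, h> / Phi y]; by regularity the two tangents are
   independent, so [m] is constant. Perturbing by [h ~ 1/p] moves [p] to the
   barycentre, which gives [1 + D_(y-p) phi p = sum_i pi_i y_i / p_i] with [pi]
   read off the gradient at the barycentre; integrating along segments yields
   [phi = sum_i pi_i ln p_i + c], and [pi_i > 0] since otherwise [Phi] would be
   affine along a line. *)

From HB Require Import structures.
From mathcomp Require Import all_boot all_order all_algebra.
From mathcomp Require Import all_classical all_reals all_analysis.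
From mathcomp Require Import ring lra.
Import Order.TTheory GRing.Theory Num.Theory.
Import numFieldNormedType.Exports.

Set Implicit Arguments. Unset Strict Implicit. Unset Printing Implicit Defensive.
Local Open Scope ring_scope.
Local Open Scope classical_set_scope.

Section RealCalculus.
Variable R : realType.

Lemma difference_quotient_cvg (g : R -> R) : derivable g 0 1 ->
  (fun s => (g s - g 0) / s) @ 0^' --> 'D_1 g 0.
Proof.
move=> dg.
have -> : (fun s => (g s - g 0) / s) =
    (fun h => h^-1 *: ((g \o shift 0) (h *: 1) - g 0)).
  by apply/funext => h /=; rewrite [_ *: 1]mulr1 addr0 mulrC.
exact: dg.
Qed.

Lemma expR_sub1_le (y : R) : expR y - 1 <= y * expR y.
Proof.
have := expR_ge1Dx (- y); rewrite expRN => H.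
have ey := expR_gt0 y.
have : 0 <= (expR y)^-1 - (1 - y) by rewrite subr_ge0.
move=> /mulr_ge0 /(_ (ltW ey)).
by rewrite mulrBl mulVf ?gt_eqF // mulrBl mul1r; lra.
Qed.

Lemma expR_sub_mul (a b : R) : expR b = expR a * expR (b - a).
Proof. by rewrite -expRD addrC subrK. Qed.

Lemma expR_segment_le (s a c : R) : 0 < s ->
  (1 - s) + s * expR a <= expR c -> expR a - 1 <= c / s * expR c.
Proof.
move=> s0 h; have := expR_sub1_le c.
rewrite mulrAC ler_pdivlMr //; nra.
Qed.

Lemma expR_midpoint_le (a b c : R) :
  (expR a + expR b) / 2 <= expR c -> (a + b) / 2 <= c * expR c.
Proof.
have := expR_ge1Dx a; have := expR_ge1Dx b; have := expR_sub1_le c; lra.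
Qed.

(* The factor [expR (g s - g 0)] tends to 1, so only the difference quotient
   matters in the limit. *)
Lemma cvg_le_derive1 (g h : R -> R) (A : R) : derivable g 0 1 ->
  h @ 0^'+ --> A ->
  (\forall s \near 0^'+, h s <= (g s - g 0) / s * expR (g s - g 0)) ->
  A <= 'D_1 g 0.
Proof.
move=> dg hA H.
have Q := cvg_dnbhs_at_right (difference_quotient_cvg dg).
set D := 'D_1 g 0 in Q *.
have S : (fun s : R => s) @ 0^'+ --> (0:R).
  by apply: cvg_at_right_filter; exact: cvg_id.
have P : (fun s => (g s - g 0) / s * s) @ 0^'+ --> D * 0 by apply: cvgM.
have E : (fun s => expR ((g s - g 0) / s * s)) @ 0^'+ --> expR (D * 0).
  by apply: continuous_cvg => //; exact: continuous_expR.
have M : (fun s => (g s - g 0) / s * expR ((g s - g 0) / s * s) - h s) @ 0^'+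
    --> D * expR (D * 0) - A.
  by apply: cvgB => //; apply: cvgM.
rewrite mulr0 expR0 mulr1 in M.
rewrite -subr_ge0; apply: (cvgr_to_ge M).
near=> s.
have s0 : s != 0 by near: s; exact: nbhs_right_neq.
rewrite /= divfK // subr_ge0.
by near: s.
Unshelve. all: by end_near. Qed.

Lemma is_derive_affine (a b t : R) : is_derive t (1:R) (fun s : R => a + b * s) b.
Proof.
have := is_deriveD (@is_derive_cst R R R a t 1)
  (@is_deriveZ _ _ _ id b t (1:R) (1:R) (is_derive_id _ _)).
by rewrite add0r [_ *: 1]mulr1.
Qed.

Lemma derive2_near_affine (G : R -> R) (a b : R) :
  (\forall t \near (0:R), G t = a + b * t) -> G^`(2) 0 = 0.
Proof.
move=> /TopologicalNumDomainType.nbhs_nbhs H.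
have D1 : \forall t \near (0:R), G^`() t = b.
  apply: filterS H => t Ht.
  rewrite derive1E (near_eq_derive _ Ht).
  by have [_ ->] := is_derive_affine a b t.
rewrite derive1nS derive1n1 derive1E (near_eq_derive _ D1).
exact: derive_cst.
Qed.

Lemma is_derive_ln_affine (a v t0 : R) : 0 < a + t0 * v ->
  is_derive t0 (1:R) (fun t : R => ln (a + t * v)) ((a + t0 * v)^-1 * v).
Proof.
move=> h.
have Hln : is_derive ((fun s : R => a + v * s) t0) (1:R) (@ln R) (a + t0 * v)^-1.
  by rewrite /= mulrC; exact: is_derive1_ln.
have := @is_derive1_comp R (@ln R) (fun s : R => a + v * s) t0 _ _ Hln
  (is_derive_affine a v t0).
have -> // : (@ln R) \o (fun s : R => a + v * s) = (fun t : R => ln (a + t * v)).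
by apply/funext => t /=; rewrite mulrC.
Qed.

Lemma is_derive0_segment (g : R -> R) :
  (forall t : R, 0 <= t <= 1 -> is_derive t (1:R) g 0) -> g 1 = g 0.
Proof.
move=> dg.
have cg : {within `[0, 1], continuous g}.
  apply: continuous_in_subspaceT => t; rewrite inE /= in_itv /= => ht.
  have [dgt _] := dg t ht.
  exact/differentiable_continuous/derivable1_diffP.
have dg' (t : R) : t \in `]0, 1[%R -> is_derive t (1:R) g 0.
  by rewrite in_itv /= => /andP[t0 t1]; apply: dg; rewrite !ltW.
have [c _] := MVT_segment ler01 dg' cg.
by rewrite mul0r => /eqP; rewrite subr_eq0 => /eqP.
Qed.

End RealCalculus.

Section Simplex.
Variables (R : realType) (n : nat).
Notation vec := 'rV[R]_n.

Lemma osimplex_of_pos (x : vec) : (forall i, 0 < x ord0 i) ->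
  \sum_(i < n) x ord0 i = 1 -> osimplex x.
Proof.
move=> hp hs; split=> // i; rewrite hp /= -hs (bigD1 i) //= lerDl.
by apply: sumr_ge0 => j _; exact: ltW.
Qed.

Lemma osimplex_gt0 (x : vec) : osimplex x -> forall i, 0 < x ord0 i.
Proof. by case=> h _ i; case/andP: (h i). Qed.

Lemma osimplex_sum (x : vec) : osimplex x -> \sum_(i < n) x ord0 i = 1.
Proof. by case. Qed.

Lemma sum_line (x v : vec) t :
  \sum_(i < n) (x + t *: v) ord0 i = \sum_(i < n) x ord0 i + t * \sum_(i < n) v ord0 i.
Proof. by under eq_bigr do rewrite !mxE; rewrite big_split /= mulr_sumr. Qed.

Lemma tangent0 : tangent (0 : vec).
Proof. by rewrite /tangent /=; under eq_bigr do rewrite !mxE; rewrite big1. Qed.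

Lemma tangentD (v w : vec) : tangent v -> tangent w -> tangent (v + w).
Proof.
rewrite /tangent /= => hv hw; have := sum_line v w 1.
by rewrite scale1r hv hw mul1r addr0.
Qed.

Lemma tangentZ (c : R) (v : vec) : tangent v -> tangent (c *: v).
Proof.
rewrite /tangent /= => hv; under eq_bigr do rewrite !mxE.
by rewrite -mulr_sumr hv mulr0.
Qed.

Lemma tangentN (v : vec) : tangent v -> tangent (- v).
Proof. by rewrite -scaleN1r; exact: tangentZ. Qed.

Lemma tangentB_osimplex (x y : vec) : osimplex x -> osimplex y -> tangent (y - x).
Proof.
move=> hx hy; rewrite /tangent /=; under eq_bigr do rewrite !mxE.
by rewrite sumrB (osimplex_sum hx) (osimplex_sum hy) subrr.
Qed.

Lemma osimplex_line (x v : vec) t : osimplex x -> tangent v ->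
  (forall i, 0 < (x + t *: v) ord0 i) -> osimplex (x + t *: v).
Proof.
move=> hx hv hp; apply: osimplex_of_pos => //.
by rewrite sum_line (osimplex_sum hx) hv mulr0 addr0.
Qed.

Lemma osimplex_segment (x y : vec) t : osimplex x -> osimplex y -> 0 <= t <= 1 ->
  osimplex (x + t *: (y - x)).
Proof.
move=> hx hy /andP[t0 t1]; apply: osimplex_line => //; first exact: tangentB_osimplex.
move=> i; rewrite !mxE.
have := osimplex_gt0 hx i; have := osimplex_gt0 hy i; nra.
Qed.

Lemma near_osimplex_line (p v : vec) : osimplex p -> tangent v ->
  \forall t \near (0:R), osimplex (p + t *: v).
Proof.
move=> hp hv.
suff : \forall t \near (0:R), forall i, 0 < (p + t *: v) ord0 i.
  by apply: filterS => t; exact: osimplex_line.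
apply: (@filter_forall _ _ _ (nbhs (0:R)) _) => i.
have pi := osimplex_gt0 hp i.
set e := p ord0 i / (`|v ord0 i| + 1).
have e0 : 0 < e by rewrite divr_gt0 // ltr_wpDl.
have ee : e * (`|v ord0 i| + 1) = p ord0 i by rewrite /e divfK // gt_eqF // ltr_wpDl.
near=> t.
have te : `|t| < e by near: t; exact: (@nbhs0_lt R R^o e e0).
rewrite !mxE.
have := ler_norm t; have := ler_normr t; have := ler_norm (v ord0 i).
have : - v ord0 i <= `|v ord0 i| by rewrite -normrN ler_norm.
have : - t <= `|t| by rewrite -normrN ler_norm.
have := normr_ge0 t; have := normr_ge0 (v ord0 i).
nra.
Unshelve. all: by end_near. Qed.

Lemma is_derive_sum_ln_affine (a v w : vec) (t0 : R) :
  (forall i, 0 < a ord0 i + t0 * v ord0 i) ->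
  is_derive t0 (1:R) (fun t : R => \sum_(i < n) w ord0 i * ln (a ord0 i + t * v ord0 i))
    (\sum_(i < n) w ord0 i * ((a ord0 i + t0 * v ord0 i)^-1 * v ord0 i)).
Proof.
move=> h.
have := @is_derive_sum R R R n (fun i t => w ord0 i * ln (a ord0 i + t * v ord0 i)) t0 1
  (fun i => w ord0 i * ((a ord0 i + t0 * v ord0 i)^-1 * v ord0 i))
  (fun i => is_deriveZ (w ord0 i) (is_derive_ln_affine (h i))).
by rewrite fct_sumE.
Qed.

End Simplex.

Section DirectionalDerivative.
Variables (R : realType) (n : nat).
Notation vec := 'rV[R]_n.
Implicit Types (f : vec -> R) (p v : vec).

Lemma difference_quotient_line f p v (s : R) :
  (fun h : R => h^-1 *: ((f \o shift (p + s *: v)) (h *: v) - f (p + s *: v))) =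
  (fun h : R => h^-1 *: (((fun t : R => f (p + t *: v)) \o shift s) (h *: 1)
                         - f (p + s *: v))).
Proof.
apply/funext => h /=; congr (_ *: (f _ - _)).
by rewrite [_ *: 1]mulr1 scalerDl addrCA addrC.
Qed.

Lemma derive_line f p v (s : R) :
  'D_v f (p + s *: v) = 'D_1 (fun t : R => f (p + t *: v)) s.
Proof. by rewrite /derive difference_quotient_line. Qed.

Lemma derivable_line f p v (s : R) :
  derivable f (p + s *: v) v <-> derivable (fun t : R => f (p + t *: v)) s 1.
Proof. by rewrite /derivable difference_quotient_line. Qed.

Lemma derive_line0 f p v : 'D_v f p = 'D_1 (fun t : R => f (p + t *: v)) 0.
Proof. by rewrite -derive_line scale0r addr0. Qed.

Lemma derivable_line0 f p v :
  derivable f p v <-> derivable (fun t : R => f (p + t *: v)) 0 1.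
Proof. by rewrite -derivable_line scale0r addr0. Qed.

Lemma derive_dirZ f p v (c : R) : derivable f p v ->
  derivable f p (c *: v) /\ 'D_(c *: v) f p = c * 'D_v f p.
Proof.
move=> /derivable_line0 dg.
set g := (fun t : R => f (p + t *: v)) in dg.
have eq : (fun t : R => f (p + t *: (c *: v))) = g \o (fun t => c * t).
  by apply/funext => t /=; rewrite /g scalerA mulrC.
have Hc : is_derive (0:R) (1:R) (fun t : R => c * t) c.
  by have := is_derive_affine 0 c 0; under eq_fun do rewrite add0r.
have Hg : is_derive ((fun t : R => c * t) 0) (1:R) g ('D_1 g 0).
  by rewrite mulr0; exact: derivableP.
have [] := is_derive1_comp Hg Hc; rewrite -eq => dgc Dgc.
split; first exact/derivable_line0.
by rewrite derive_line0 (derive_line0 f p v) Dgc mulrC.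
Qed.

End DirectionalDerivative.

Section ExpConcave.
Variables (R : realType) (n : nat) (phi : 'rV[R]_n -> R).
Notation vec := 'rV[R]_n.
Hypothesis hcon : exp_concave phi.

Lemma exp_concave_segment (p q : vec) s : osimplex p -> osimplex q -> 0 <= s <= 1 ->
  (1 - s) * expR (phi p) + s * expR (phi q) <= expR (phi (p + s *: (q - p))).
Proof.
move=> hp hq hs.
suff -> : p + s *: (q - p) = (1 - s) *: p + s *: q by apply: hcon.
by apply/rowP => i; rewrite !mxE; ring.
Qed.

Lemma exp_concave_tangent (p q : vec) : osimplex p -> osimplex q ->
  derivable phi p (q - p) -> expR (phi q) <= expR (phi p) * (1 + 'D_(q - p) phi p).
Proof.
move=> hp hq /derivable_line0 dg; rewrite derive_line0.
set g := fun t : R => phi (p + t *: (q - p)) in dg *.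
have g0 : g 0 = phi p by rewrite /g scale0r addr0.
have g1 : g 1 = phi q by rewrite /g scale1r addrC subrK.
rewrite -g0 -g1 (expR_sub_mul (g 0) (g 1)) ler_pM2l ?expR_gt0 // -lerBlDl.
apply: (cvg_le_derive1 dg (cvg_cst _)).
near=> s.
have s0 : 0 < s by near: s; exact: nbhs_right_gt.
have s1 : s < 1 by near: s; exact: nbhs_right_lt.
have s01 : 0 <= s <= 1 by apply/andP; split; lra.
apply: expR_segment_le => //.
have := exp_concave_segment hp hq s01.
rewrite -g0 -g1 -/(g s) (expR_sub_mul (g 0) (g 1)) (expR_sub_mul (g 0) (g s)).
move=> H; rewrite -(ler_pM2l (expR_gt0 (g 0))); nra.
Unshelve. all: by end_near. Qed.

Lemma exp_concave_midpoint (p v w : vec) (s : R) :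
  osimplex (p + s *: v) -> osimplex (p + s *: w) ->
  ((phi (p + s *: v) - phi p) + (phi (p + s *: w) - phi p)) / 2
  <= (phi (p + s *: (2^-1 *: (v + w))) - phi p)
     * expR (phi (p + s *: (2^-1 *: (v + w))) - phi p).
Proof.
move=> pv pw; apply: expR_midpoint_le.
have h2 : (0:R) <= (2^-1 : R) <= 1 by apply/andP; split; lra.
have := hcon pv pw h2.
have -> : (1 - 2^-1) *: (p + s *: v) + 2^-1 *: (p + s *: w)
    = p + s *: (2^-1 *: (v + w)) by apply/rowP => i; rewrite !mxE; field.
rewrite !(expR_sub_mul (phi p) (phi (p + _))).
move=> H; rewrite -(ler_pM2l (expR_gt0 (phi p))); nra.
Qed.

Hypothesis hder : forall p v, osimplex p -> tangent v -> derivable phi p v.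

Lemma derive_dir_superadditive (p v w : vec) : osimplex p -> tangent v -> tangent w ->
  'D_v phi p + 'D_w phi p <= 'D_(v + w) phi p.
Proof.
move=> hp hv hw.
set u := 2^-1 *: (v + w).
have hu : tangent u by apply/tangentZ/tangentD.
have [_ Du] := derive_dirZ (2^-1) (hder hp (tangentD hv hw)).
suff : ('D_v phi p + 'D_w phi p) / 2 <= 'D_u phi p by rewrite Du; lra.
have := hder hp hv; have := hder hp hw; have := hder hp hu.
rewrite (derive_line0 phi p v) (derive_line0 phi p w) (derive_line0 phi p u).
rewrite !derivable_line0.
set gv := fun t : R => phi (p + t *: v).
set gw := fun t : R => phi (p + t *: w).
set gu := fun t : R => phi (p + t *: u) => du dw dv.
apply: (cvg_le_derive1 du (h := fun s => ((gv s - gv 0) / s + (gw s - gw 0) / s) / 2)).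
  apply: cvgM (cvg_cst _).
  by apply: cvgD; apply/cvg_dnbhs_at_right/difference_quotient_cvg.
near=> s.
have s0 : 0 < s by near: s; exact: nbhs_right_gt.
have pv : osimplex (p + s *: v).
  by near: s; apply: cvg_within; exact: near_osimplex_line.
have pw : osimplex (p + s *: w).
  by near: s; apply: cvg_within; exact: near_osimplex_line.
have := exp_concave_midpoint pv pw; rewrite /gv /gw /gu /= !scale0r !addr0 -/u.
set A := phi (p + s *: v) - phi p; set B := phi (p + s *: w) - phi p.
set C := phi (p + s *: u) - phi p => H.
have -> : (A / s + B / s) / 2 = (A + B) / 2 / s by field; rewrite gt_eqF.
by rewrite [C / s * _]mulrAC ler_pM2r ?invr_gt0.
Unshelve. all: by end_near. Qed.

Lemma derive_dirN (p v : vec) : osimplex p -> tangent v -> 'D_(- v) phi p = - 'D_v phi p.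
Proof.
move=> hp hv; have [_] := derive_dirZ (-1) (hder hp hv).
by rewrite scaleN1r mulN1r.
Qed.

Lemma derive_dirD (p v w : vec) : osimplex p -> tangent v -> tangent w ->
  'D_(v + w) phi p = 'D_v phi p + 'D_w phi p.
Proof.
move=> hp hv hw; apply/eqP; rewrite eq_le derive_dir_superadditive // andbT.
have := derive_dir_superadditive hp (tangentN hv) (tangentN hw).
rewrite -opprD !derive_dirN //; [lra | exact: tangentD].
Qed.

Lemma derive_dir_sum (p : vec) k (u : 'I_k -> vec) (c : 'I_k -> R) : osimplex p ->
  (forall i, tangent (u i)) ->
  'D_(\sum_(i < k) c i *: u i) phi p = \sum_(i < k) c i * 'D_(u i) phi p.
Proof.
move=> hp hu.
suff [] : tangent (\sum_(i < k) c i *: u i) /\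
  'D_(\sum_(i < k) c i *: u i) phi p = \sum_(i < k) c i * 'D_(u i) phi p by [].
apply: (big_ind2 (fun v d => tangent v /\ 'D_v phi p = d)).
- by split; [exact: tangent0 | exact: derive0].
- move=> x1 x2 y1 y2 [t1 e1] [t2 e2]; split; first exact: tangentD.
  by rewrite derive_dirD // e1 e2.
- move=> i _; split; first exact: tangentZ.
  by have [_ ->] := derive_dirZ (c i) (hder hp (hu i)).
Qed.

End ExpConcave.

Section Perturbation.
Variables (R : realType) (n : nat).
Notation vec := 'rV[R]_n.

Definition dot (x h : vec) : R := \sum_(j < n) x ord0 j * h ord0 j.

Lemma perturbE (x h : vec) i : perturb x h ord0 i = x ord0 i * h ord0 i / dot x h.
Proof. by rewrite /perturb mxE. Qed.

Lemma osimplex_n_gt0 (x : vec) : osimplex x -> (0 < n)%N.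
Proof.
case: n x => // x /osimplex_sum; rewrite big_ord0 => /eqP.
by rewrite eq_sym oner_eq0.
Qed.

Lemma dot_gt0 (x h : vec) : osimplex x -> osimplex h -> 0 < dot x h.
Proof.
move=> hx hh; rewrite /dot (bigD1 (Ordinal (osimplex_n_gt0 hx))) //=.
apply: ltr_wpDr; last by apply: mulr_gt0; exact: osimplex_gt0.
by apply: sumr_ge0 => j _; apply: mulr_ge0; apply: ltW; exact: osimplex_gt0.
Qed.

Lemma perturb_osimplex (x h : vec) : osimplex x -> osimplex h ->
  osimplex (perturb x h).
Proof.
move=> hx hh; have d0 := dot_gt0 hx hh.
apply: osimplex_of_pos => [i|].
  by rewrite perturbE divr_gt0 // mulr_gt0 //; exact: osimplex_gt0.
under eq_bigr do rewrite perturbE.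
by rewrite -mulr_suml divff // gt_eqF.
Qed.

Lemma dot_segment (x y h : vec) s :
  dot (x + s *: (y - x)) h = dot x h + s * (dot y h - dot x h).
Proof.
rewrite /dot -sumrB mulr_sumr -big_split /=.
by apply: eq_bigr => i _; rewrite !mxE; ring.
Qed.

Lemma perturb_segment (x y h : vec) s : osimplex x -> osimplex y -> osimplex h ->
  0 <= s <= 1 ->
  perturb (x + s *: (y - x)) h - perturb x h =
  (s * dot y h / dot (x + s *: (y - x)) h) *: (perturb y h - perturb x h).
Proof.
move=> hx hy hh hs; have := dot_gt0 (osimplex_segment hx hy hs) hh.
have := dot_gt0 hx hh; have := dot_gt0 hy hh.
rewrite dot_segment; set X := dot x h; set Y := dot y h => Y0 X0 Z0.
apply/rowP => i; rewrite !mxE -/(dot x h) -/(dot y h) -/(dot (x + s *: (y - x)) h).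
rewrite dot_segment -/X -/Y.
by field; rewrite !gt_eqF.
Qed.

End Perturbation.

Section TangentOfExp.
Variables (R : realType) (n : nat) (phi : 'rV[R]_n -> R).
Notation vec := 'rV[R]_n.
Hypothesis hcon : exp_concave phi.
Hypothesis hder : forall p v, osimplex p -> tangent v -> derivable phi p v.

Definition expR_tangent (x y : vec) : R := expR (phi x) * (1 + 'D_(y - x) phi x).

Lemma le_expR_tangent (x y : vec) : osimplex x -> osimplex y ->
  expR (phi y) <= expR_tangent x y.
Proof.
move=> hx hy; apply: exp_concave_tangent => //.
by apply: hder => //; exact: tangentB_osimplex.
Qed.

Lemma expR_tangent_gt0 (x y : vec) : osimplex x -> osimplex y -> 0 < expR_tangent x y.
Proof. by move=> hx hy; apply: lt_le_trans (le_expR_tangent hx hy); exact: expR_gt0. Qed.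

Lemma one_add_derive_gt0 (x y : vec) : osimplex x -> osimplex y ->
  0 < 1 + 'D_(y - x) phi x.
Proof.
by move=> hx hy; have := expR_tangent_gt0 hx hy; rewrite pmulr_rgt0 // expR_gt0.
Qed.

Lemma expR_logdiv (x y : vec) : osimplex x -> osimplex y ->
  expR (logdiv phi y x) = expR_tangent x y / expR (phi y).
Proof.
move=> hx hy; have D0 := one_add_derive_gt0 hx hy.
rewrite /logdiv /dirder /expR_tangent expRD lnK ?posrE //.
by rewrite opprB expRD expRN; ring.
Qed.

Lemma expR_tangentZ (x y w : vec) (lam : R) : osimplex x -> tangent w ->
  y - x = lam *: w -> expR_tangent x y = expR (phi x) * (1 + lam * 'D_w phi x).
Proof.
by move=> hx hw e; rewrite /expR_tangent e; have [_ ->] := derive_dirZ lam (hder hx hw).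
Qed.

End TangentOfExp.

(* Subtracting [m 0 * (a, b)] from [(c, d)] leaves [(gamma t, delta t)]; then
   [c b - d a = t (gamma b - delta a)] vanishes at [t = 1/2, 1], so the affine
   map [gamma b - delta a] is zero, and independence of [a] and [b] forces
   [gamma = delta = 0]. *)
Lemma affine_ratio_const (R : realFieldType) (a0 a1 b0 b1 c0 c1 d0 d1 : R)
    (m : R -> R) :
  0 < a0 + a1 -> a0 * b1 != a1 * b0 ->
  (forall t, 0 <= t <= 1 ->
     c0 + c1 * t = (a0 + a1 * t) * m t /\ d0 + d1 * t = (b0 + b1 * t) * m t) ->
  m 0 = m 1.
Proof.
move=> pa det H.
have [|h0 h0'] := H 0; first by rewrite lexx ler01.
have [|h1 h1'] := H (2^-1); first by apply/andP; split; lra.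
have [|h2 h2'] := H 1; first by rewrite ler01 lexx.
rewrite !mulr0 !addr0 in h0 h0'; rewrite !mulr1 in h2 h2'.
set g := c1 - m 0 * a1; set d := d1 - m 0 * b1.
set e1 := g * b0 - d * a0; set e2 := g * b1 - d * a1.
have F2 : e1 + e2 = 0.
  have : (c0 + c1) * (b0 + b1) - (d0 + d1) * (a0 + a1) = 0 by rewrite h2 h2'; ring.
  by rewrite h0 h0' => <-; rewrite /e1 /e2 /g /d; ring.
have F1 : e1 / 2 + e2 / 4 = 0.
  have : (c0 + c1 * 2^-1) * (b0 + b1 * 2^-1) - (d0 + d1 * 2^-1) * (a0 + a1 * 2^-1) = 0.
    by rewrite h1 h1'; ring.
  by rewrite h0 h0' => <-; rewrite /e1 /e2 /g /d; field.
have e10 : e1 = 0 by lra.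
have e20 : e2 = 0 by lra.
have G : g * (a0 * b1 - a1 * b0) = a0 * e2 - a1 * e1 by rewrite /e1 /e2 /d; ring.
rewrite e10 e20 !mulr0 subrr in G.
have g0 : g = 0.
  have det' : a0 * b1 - a1 * b0 != 0 by rewrite subr_eq0.
  by move/eqP: G; rewrite mulf_eq0 (negbTE det') orbF => /eqP.
apply: (mulfI (lt0r_neq0 pa)); rewrite -h2 h0.
by move: g0; rewrite /g => /eqP; rewrite subr_eq0 => /eqP ->; ring.
Qed.

Section PerturbationInvariance.
Variables (R : realType) (n : nat) (phi : 'rV[R]_n -> R).
Notation vec := 'rV[R]_n.
Local Notation Phi x := (expR (phi x)).
Hypothesis hcon : exp_concave phi.
Hypothesis hder : forall p v, osimplex p -> tangent v -> derivable phi p v.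
Hypothesis hreg : forall p v, osimplex p -> tangent v -> v != 0 ->
  (fun t : R => expR (phi (p + t *: v)))^`(2) 0 < 0.

Lemma not_near_affine_expR (p v : vec) (a b : R) : osimplex p -> tangent v -> v != 0 ->
  ~ (\forall t \near (0:R), Phi (p + t *: v) = a + b * t).
Proof.
move=> hp hv v0 /derive2_near_affine d2.
by have := hreg hp hv v0; rewrite d2 ltxx.
Qed.

(* Otherwise both tangent inequalities become equalities, so [Phi] is affine on
   [[x, y]], contradicting regularity. *)
Lemma tangents_independent (x y : vec) : osimplex x -> osimplex y -> x != y ->
  Phi x * (- (Phi y * 'D_(x - y) phi y))
  != (Phi x * 'D_(y - x) phi x) * (Phi y * (1 + 'D_(x - y) phi y)).
Proof.
move=> hx hy xy; apply/negP => /eqP det.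
move: det; set Dx := 'D_(y - x) phi x; set Dy := 'D_(x - y) phi y => det.
have k1 : Phi y <= Phi x * (1 + Dx) by exact: le_expR_tangent.
have k2 : Phi x <= Phi y * (1 + Dy) by exact: le_expR_tangent.
have px := expR_gt0 (phi x); have py := expR_gt0 (phi y).
have e1 : Phi y * (1 + Dy) = Phi x by nra.
have e2 : Phi y = Phi x + Phi x * Dx by nra.
have affine t : 0 <= t <= 1 -> Phi (x + t *: (y - x)) = Phi x + Phi x * Dx * t.
  move=> ht; apply/eqP; rewrite eq_le; apply/andP; split.
    have := le_expR_tangent hcon hder hx (osimplex_segment hx hy ht).
    rewrite (@expR_tangentZ _ _ _ hder x _ (y - x) t) //.
    - by rewrite -/Dx; lra.
    - exact: tangentB_osimplex.
    - by rewrite addrAC subrr add0r.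
  by have := exp_concave_segment hcon hx hy ht; rewrite e2; lra.
have hm : osimplex (x + 2^-1 *: (y - x)).
  by apply: osimplex_segment => //; apply/andP; split; lra.
apply: (@not_near_affine_expR _ (y - x) (Phi x + Phi x * Dx / 2) (Phi x * Dx) hm).
- exact: tangentB_osimplex.
- by rewrite subr_eq0 eq_sym.
near=> s.
have hs : `|s| < 2^-1 by near: s; apply: (@nbhs0_lt R R^o); lra.
rewrite -addrA -scalerDl affine; first by ring.
by move: hs; rewrite ltr_norml => /andP[? ?]; apply/andP; split; lra.
Unshelve. all: by end_near. Qed.

Hypothesis hinv : forall p q h : vec, osimplex p -> osimplex q -> osimplex h ->
  logdiv phi (perturb q h) (perturb p h) = logdiv phi q p.

Lemma expR_tangent_perturb (x y h : vec) : osimplex x -> osimplex y -> osimplex h ->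
  expR_tangent phi (perturb x h) (perturb y h) / Phi (perturb y h)
  = expR_tangent phi x y / Phi y.
Proof.
by move=> hx hy hh; rewrite -!expR_logdiv ?hinv //; exact: perturb_osimplex.
Qed.

Definition perturb_factor (h y : vec) : R := Phi (perturb y h) * dot y h / Phi y.

Lemma perturb_factor_segment (x y h : vec) (t : R) :
  osimplex x -> osimplex y -> osimplex h -> 0 <= t <= 1 ->
  Phi (perturb x h) * (dot (x + t *: (y - x)) h + t * dot y h *
     'D_(perturb y h - perturb x h) phi (perturb x h))
  = Phi x * (1 + t * 'D_(y - x) phi x) * perturb_factor h (x + t *: (y - x)).
Proof.
move=> hx hy hh ht.
set l := x + t *: (y - x).
have hl : osimplex l by exact: osimplex_segment.
have dl := dot_gt0 hl hh.
have K1 : expR_tangent phi x l = Phi x * (1 + t * 'D_(y - x) phi x).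
  apply: expR_tangentZ => //; first exact: tangentB_osimplex.
  by rewrite /l addrAC subrr add0r.
have K2 : expR_tangent phi (perturb x h) (perturb l h) = Phi (perturb x h) *
    (1 + (t * dot y h / dot l h) * 'D_(perturb y h - perturb x h) phi (perturb x h)).
  apply: expR_tangentZ => //; try exact: perturb_osimplex.
    by apply: tangentB_osimplex; exact: perturb_osimplex.
  exact: perturb_segment.
have E := expR_tangent_perturb hx hl hh; rewrite K2 in E.
have P1 := expR_gt0 (phi l); have P2 := expR_gt0 (phi (perturb l h)).
rewrite -K1 -[expR_tangent phi x l](divfK (lt0r_neq0 P1)) -E /perturb_factor -/l.
by field; rewrite !gt_eqF.
Qed.

Lemma perturb_factor_segment_rev (x y h : vec) (t : R) :
  osimplex x -> osimplex y -> osimplex h -> 0 <= t <= 1 ->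
  Phi (perturb y h) * (dot (x + t *: (y - x)) h + (1 - t) * dot x h *
     'D_(perturb x h - perturb y h) phi (perturb y h))
  = Phi y * (1 + (1 - t) * 'D_(x - y) phi y) * perturb_factor h (x + t *: (y - x)).
Proof.
move=> hx hy hh /andP[t0 t1].
have -> : x + t *: (y - x) = y + (1 - t) *: (x - y).
  by apply/rowP => i; rewrite !mxE; ring.
by apply: perturb_factor_segment => //; apply/andP; split; lra.
Qed.

Lemma perturb_factor_const (h x y : vec) : osimplex h -> osimplex x -> osimplex y ->
  perturb_factor h x = perturb_factor h y.
Proof.
move=> hh hx hy; have [->|xy] := eqVneq x y; first by [].
pose m t := perturb_factor h (x + t *: (y - x)).
have -> : perturb_factor h x = m 0 by rewrite /m scale0r addr0.
have -> : perturb_factor h y = m 1 by rewrite /m scale1r addrC subrK.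
pose Dx := 'D_(y - x) phi x; pose Dy := 'D_(x - y) phi y.
pose Dxh := 'D_(perturb y h - perturb x h) phi (perturb x h).
pose Dyh := 'D_(perturb x h - perturb y h) phi (perturb y h).
pose X := dot x h; pose Y := dot y h.
apply: (@affine_ratio_const _ (Phi x) (Phi x * Dx) (Phi y * (1 + Dy)) (- (Phi y * Dy))
  (Phi (perturb x h) * X) (Phi (perturb x h) * (Y - X + Y * Dxh))
  (Phi (perturb y h) * (X + X * Dyh)) (Phi (perturb y h) * (Y - X - X * Dyh))).
- by have := expR_tangent_gt0 hcon hder hx hy; rewrite /expR_tangent -/Dx; nra.
- exact: tangents_independent.
move=> t ht; rewrite /m; split.
- have := perturb_factor_segment hx hy hh ht; rewrite dot_segment => E.
  by apply: (eq_trans _ (eq_trans E _)); rewrite /X /Y /Dx /Dxh; ring.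
- have := perturb_factor_segment_rev hx hy hh ht; rewrite dot_segment => E.
  by apply: (eq_trans _ (eq_trans E _)); rewrite /X /Y /Dy /Dyh; ring.
Qed.

End PerturbationInvariance.

Section GradientWeights.
Variables (R : realType) (n : nat) (phi : 'rV[R]_n -> R).
Notation vec := 'rV[R]_n.
Local Notation Phi x := (expR (phi x)).
Hypothesis n_gt0 : (0 < n)%N.
Hypothesis hcon : exp_concave phi.
Hypothesis hder : forall p v, osimplex p -> tangent v -> derivable phi p v.
Hypothesis hreg : forall p v, osimplex p -> tangent v -> v != 0 ->
  (fun t : R => expR (phi (p + t *: v)))^`(2) 0 < 0.
Hypothesis hinv : forall p q h : vec, osimplex p -> osimplex q -> osimplex h ->
  logdiv phi (perturb q h) (perturb p h) = logdiv phi q p.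

Definition uniform : vec := \row_(i < n) (n%:R)^-1.
Definition recip (p : vec) : vec :=
  \row_(i < n) ((p ord0 i)^-1 / \sum_(j < n) (p ord0 j)^-1).
Definition basis_dir (i : 'I_n) : vec := delta_mx 0 i - uniform.

(* If [phi p = sum_j pi_j ln p_j + c], then [1 + 'D_(basis_dir i) phi uniform]
   is [n pi_i], so these weights recover [pi]. *)
Definition weights : vec :=
  \row_(i < n) ((1 + 'D_(basis_dir i) phi uniform) / n%:R).

Lemma natn_neq0 : (n%:R : R) != 0.
Proof. by rewrite pnatr_eq0 -lt0n. Qed.

Lemma sumr_const_ord (c : R) : \sum_(i < n) c = n%:R * c.
Proof. by rewrite sumr_const card_ord mulr_natl. Qed.

Lemma uniform_osimplex : osimplex uniform.
Proof.
apply: osimplex_of_pos => [i|]; first by rewrite mxE invr_gt0 ltr0n.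
by under eq_bigr do rewrite mxE; rewrite sumr_const_ord divff // natn_neq0.
Qed.

Lemma sum_inv_gt0 (p : vec) : osimplex p -> 0 < \sum_(j < n) (p ord0 j)^-1.
Proof.
move=> hp; rewrite (bigD1 (Ordinal n_gt0)) //=; apply: ltr_wpDr.
  by apply: sumr_ge0 => j _; rewrite invr_ge0; apply: ltW; exact: osimplex_gt0.
by rewrite invr_gt0; exact: osimplex_gt0.
Qed.

Lemma recip_osimplex (p : vec) : osimplex p -> osimplex (recip p).
Proof.
move=> hp; have s0 := sum_inv_gt0 hp; apply: osimplex_of_pos => [i|].
  by rewrite mxE divr_gt0 ?invr_gt0 //; exact: osimplex_gt0.
by under eq_bigr do rewrite mxE; rewrite -mulr_suml divff // gt_eqF.
Qed.

Lemma dot_recip (p : vec) : osimplex p ->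
  dot p (recip p) = n%:R / \sum_(j < n) (p ord0 j)^-1.
Proof.
move=> hp; rewrite /dot.
under eq_bigr => i _ do rewrite mxE mulrA divff ?mul1r ?gt_eqF ?(osimplex_gt0 hp i) //.
by rewrite sumr_const_ord.
Qed.

Lemma perturb_recip (p : vec) : osimplex p -> perturb p (recip p) = uniform.
Proof.
move=> hp; apply/rowP => i; rewrite perturbE dot_recip // !mxE.
have := sum_inv_gt0 hp; have := osimplex_gt0 hp i => pi0 s0.
by field; rewrite natn_neq0 !gt_eqF.
Qed.

Lemma recip_perturbE (p y : vec) i : osimplex p -> osimplex y ->
  perturb y (recip p) ord0 i * dot y (recip p) / dot p (recip p)
  = y ord0 i / p ord0 i / n%:R.
Proof.
move=> hp hy; have := dot_gt0 hy (recip_osimplex hp).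
rewrite perturbE dot_recip // !mxE => dy.
have := sum_inv_gt0 hp; have := osimplex_gt0 hp i => pi0 s0.
by field; rewrite natn_neq0 !gt_eqF.
Qed.

Lemma tangent_basis_dir i : tangent (basis_dir i).
Proof.
rewrite /tangent /= /basis_dir; under eq_bigr do rewrite !mxE.
rewrite sumrB (bigD1 i) //= !eqxx /= big1 => [|j ji]; last by rewrite (negbTE ji).
by rewrite addr0 sumr_const_ord divff ?subrr // natn_neq0.
Qed.

Lemma sub_uniformE (z : vec) : \sum_(i < n) z ord0 i = 1 ->
  z - uniform = \sum_(i < n) z ord0 i *: basis_dir i.
Proof.
move=> hz; apply/rowP => j; rewrite summxE !mxE.
under eq_bigr do rewrite !mxE mulrBr.
rewrite sumrB -mulr_suml hz mul1r (bigD1 j) //= !eqxx /= mulr1.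
by rewrite big1 ?addr0 // => i ij; rewrite eq_sym (negbTE ij) mulr0.
Qed.

Lemma expR_tangent_uniform (z : vec) : osimplex z ->
  expR_tangent phi uniform z = Phi uniform * (n%:R * \sum_(i < n) weights ord0 i * z ord0 i).
Proof.
move=> hz; rewrite /expR_tangent sub_uniformE ?(osimplex_sum hz) //.
rewrite (derive_dir_sum hcon hder (fun i => z ord0 i) uniform_osimplex);
  last exact: tangent_basis_dir.
congr (_ * _); rewrite -{1}(osimplex_sum hz) -big_split mulr_sumr /=.
by apply: eq_bigr => i _; rewrite mxE; field; rewrite natn_neq0.
Qed.

Lemma one_add_deriveE (p y : vec) : osimplex p -> osimplex y ->
  1 + 'D_(y - p) phi p = \sum_(i < n) weights ord0 i * y ord0 i / p ord0 i.
Proof.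
move=> hp hy; set h := recip p.
have hh : osimplex h by exact: recip_osimplex.
have hyh := perturb_osimplex hy hh.
have I := expR_tangent_perturb hcon hder hinv hp hy hh.
have M := perturb_factor_const hcon hder hreg hinv hh hy hp.
rewrite /perturb_factor perturb_recip // in M; rewrite perturb_recip // in I.
have := expR_gt0 (phi p); have := expR_gt0 (phi y).
have := expR_gt0 (phi uniform); have := expR_gt0 (phi (perturb y h)).
have := dot_gt0 hp hh; have := dot_gt0 hy hh => dy dp Pyh Pu Py Pp.
have Kpy : expR_tangent phi p y
    = expR_tangent phi uniform (perturb y h) / Phi (perturb y h) * Phi y.
  by rewrite I; field; rewrite gt_eqF.
have Pyh_eq : Phi (perturb y h) = Phi uniform * dot p h * Phi y / (Phi p * dot y h).
  transitivity (Phi (perturb y h) * dot y h / Phi y * Phi y / dot y h).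
    by field; rewrite !gt_eqF.
  by rewrite M; field; rewrite !gt_eqF.
have -> : 1 + 'D_(y - p) phi p = expR_tangent phi p y / Phi p.
  by rewrite /expR_tangent; field; rewrite gt_eqF.
rewrite Kpy Pyh_eq expR_tangent_uniform //.
set S := \sum_(i < n) weights ord0 i * perturb y h ord0 i.
transitivity (S * (n%:R * dot y h / dot p h)); first by field; rewrite !gt_eqF.
rewrite /S mulr_suml; apply: eq_bigr => i _.
have := recip_perturbE i hp hy; rewrite -/h => Ei.
transitivity (weights ord0 i * (perturb y h ord0 i * dot y h / dot p h) * n%:R).
  by ring.
by rewrite Ei; field; rewrite natn_neq0 gt_eqF // osimplex_gt0.
Qed.

Lemma weights_sum : \sum_(i < n) weights ord0 i = 1.
Proof.
have hu := uniform_osimplex.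
have := one_add_deriveE hu hu; rewrite subrr derive0 addr0 => ->.
by apply: eq_bigr => i _; rewrite mulfK // gt_eqF // osimplex_gt0.
Qed.

Lemma derive_dirE (p w : vec) : osimplex p -> tangent w ->
  'D_w phi p = \sum_(i < n) weights ord0 i * (w ord0 i / p ord0 i).
Proof.
move=> hp hw.
have : \forall t \near 0^'+, 0 < t /\ osimplex (p + t *: w).
  near=> t; split; first by near: t; exact: nbhs_right_gt.
  by near: t; apply: cvg_within; exact: near_osimplex_line.
case/filter_ex => t [t0 ht].
have := one_add_deriveE hp ht.
rewrite (_ : p + t *: w - p = t *: w); last by rewrite addrC addKr.
rewrite (derive_dirZ t (hder hp hw)).2 => E.
apply: (mulfI (lt0r_neq0 t0)).
have -> : t * 'D_w phi p = \sum_(i < n) weights ord0 i * (p + t *: w) ord0 i / p ord0 i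
    - \sum_(i < n) weights ord0 i by rewrite weights_sum -E; ring.
rewrite -sumrB mulr_sumr; apply: eq_bigr => i _; rewrite !mxE.
by field; rewrite ?natn_neq0 ?(lt0r_neq0 (osimplex_gt0 hp i)).
Unshelve. all: by end_near. Qed.

Lemma phi_weightsE (y : vec) : osimplex y ->
  phi y = \sum_(i < n) weights ord0 i * ln (y ord0 i)
          + (phi uniform - \sum_(i < n) weights ord0 i * ln (uniform ord0 i)).
Proof.
move=> hy; have hu := uniform_osimplex.
set v := y - uniform.
pose g t := phi (uniform + t *: v)
  - \sum_(i < n) weights ord0 i * ln (uniform ord0 i + t * v ord0 i).
have : g 1 = g 0.
  apply: is_derive0_segment => t ht.
  have hl : osimplex (uniform + t *: v) by exact: osimplex_segment.
  have pos i : 0 < uniform ord0 i + t * v ord0 i.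
    by have := osimplex_gt0 hl i; rewrite !mxE.
  have /derivable_line/derivableP := hder hl (tangentB_osimplex hu hy).
  rewrite -derive_line => Dphi.
  have := is_deriveB Dphi (is_derive_sum_ln_affine weights pos).
  rewrite derive_dirE //; last exact: tangentB_osimplex.
  suff -> : \sum_(i < n) weights ord0 i * (v ord0 i / (uniform + t *: v) ord0 i)
    - \sum_(i < n) weights ord0 i * ((uniform ord0 i + t * v ord0 i)^-1 * v ord0 i)
    = 0 by [].
  by rewrite -sumrB big1 // => i _; rewrite !mxE; ring.
have e1 : uniform + 1 *: v = y by rewrite scale1r /v addrC subrK.
rewrite /g e1 scale0r addr0 => E.
have -> : \sum_(i < n) weights ord0 i * ln (y ord0 i)
    = \sum_(i < n) weights ord0 i * ln (uniform ord0 i + 1 * v ord0 i).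
  by apply: eq_bigr => i _; rewrite /v !mxE; congr (_ * ln _); ring.
have -> : \sum_(i < n) weights ord0 i * ln (uniform ord0 i)
    = \sum_(i < n) weights ord0 i * ln (uniform ord0 i + 0 * v ord0 i).
  by apply: eq_bigr => i _; rewrite mul0r addr0.
by rewrite -E; ring.
Qed.

(* If [1 + D < 0] for [D = 'D_(basis_dir i) phi uniform], the tangent of [Phi]
   at the barycentre vanishes at the simplex point of parameter [s = -1/D]. *)
Lemma weights_ge0 (i : 'I_n) : 0 <= weights ord0 i.
Proof.
rewrite mxE divr_ge0 ?ler0n //.
set D := 'D_(basis_dir i) phi uniform.
case: (lerP 0 (1 + D)) => // hD.
set s := - D^-1.
have D0 : D != 0 by rewrite lt_eqF //; lra.
have s0 : 0 < s by rewrite /s oppr_gt0 invr_lt0; lra.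
have s1 : s < 1.
  rewrite /s -(@ltr_pM2l _ (- D)); last by lra.
  by rewrite mulrN mulNr opprK divff // mulr1; lra.
have hy : osimplex (uniform + s *: basis_dir i).
  apply: osimplex_line; [exact: uniform_osimplex | exact: tangent_basis_dir |].
  move=> j; rewrite !mxE eqxx /=.
  have ni : 0 < (n%:R : R)^-1 by rewrite invr_gt0 ltr0n.
  have ni1 : (n%:R : R)^-1 <= 1 by rewrite invf_le1 ?ltr0n // ler1n.
  by case: (j == i) => /=; nra.
have := one_add_derive_gt0 hcon hder uniform_osimplex hy.
have -> : uniform + s *: basis_dir i - uniform = s *: basis_dir i by rewrite addrC addKr.
rewrite (derive_dirZ s (hder uniform_osimplex (tangent_basis_dir i))).2.
by rewrite -/D /s mulNr mulVf //; lra.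
Qed.

(* If [weights_i = 0], then [Phi] is affine along the line through the
   barycentre in direction [- basis_dir i], contradicting regularity. *)
Lemma weights_gt0 (i : 'I_n) : (1 < n)%N -> 0 < weights ord0 i.
Proof.
move=> n_gt1; rewrite lt0r weights_ge0 andbT; apply/negP => /eqP w0.
set v := - basis_dir i.
have hv : tangent v by apply/tangentN/tangent_basis_dir.
have nR : (1 : R) < n%:R by rewrite ltr1n.
have v0 : v != 0.
  apply/negP => /eqP /(congr1 (fun w : vec => w ord0 i)).
  rewrite /v !mxE !eqxx /=.
  have : (n%:R : R)^-1 < 1 by rewrite invf_lt1 ?ltr0n.
  lra.
set C := phi uniform - \sum_(j < n) weights ord0 j * ln (uniform ord0 j).
apply: (not_near_affine_expR hreg (a := expR C / n%:R) (b := expR C / n%:R)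
  uniform_osimplex hv v0).
have N1 := near_osimplex_line uniform_osimplex hv.
near=> s.
have hs : osimplex (uniform + s *: v) by near: s.
have s1 : `|s| < 1 by near: s; exact: (@nbhs0_lt R R^o 1 ltr01).
have s1' : 0 < 1 + s by move: s1; rewrite ltr_norml => /andP[? ?]; lra.
rewrite phi_weightsE //.
have -> : \sum_(j < n) weights ord0 j * ln ((uniform + s *: v) ord0 j) =
          \sum_(j < n) weights ord0 j * ln ((1 + s) / n%:R).
  apply: eq_bigr => j _; have [->|ji] := eqVneq j i; first by rewrite w0 !mul0r.
  by congr (_ * ln _); rewrite /v !mxE eqxx (negbTE ji) /=; ring.
rewrite -mulr_suml weights_sum mul1r expRD lnK; first by field; rewrite natn_neq0.
by rewrite posrE divr_gt0 // ltr0n.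
Unshelve. all: by end_near. Qed.

End GradientWeights.

Section CrossEntropyPotential.
Variables (R : realType) (n : nat) (phi : 'rV[R]_n -> R).
Notation vec := 'rV[R]_n.
Variables (pi : vec) (c : R).
Hypothesis hpi : osimplex pi.
Hypothesis phiE : forall p : vec, osimplex p -> phi p = - cross_entropy pi p + c.

Lemma phi_sum_lnE (p : vec) : osimplex p ->
  phi p = \sum_(i < n) pi ord0 i * ln (p ord0 i) + c.
Proof. by move=> hp; rewrite phiE // /cross_entropy opprK. Qed.

Lemma one_add_derive_cross (p q : vec) : osimplex p -> osimplex q ->
  1 + 'D_(q - p) phi p = \sum_(i < n) pi ord0 i * q ord0 i / p ord0 i.
Proof.
move=> hp hq; set v := q - p.
have hv : tangent v by exact: tangentB_osimplex.
have pos i : 0 < p ord0 i + 0 * v ord0 i by rewrite mul0r addr0; exact: osimplex_gt0.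
have [_ D] := is_deriveD (is_derive_sum_ln_affine pi pos) (@is_derive_cst R R R c 0 1).
rewrite derive_line0 (@near_eq_derive R R R _
  (fun t => \sum_(i < n) pi ord0 i * ln (p ord0 i + t * v ord0 i) + c)).
  rewrite D addr0 -{1}(osimplex_sum hpi) -big_split /=; apply: eq_bigr => i _.
  have := osimplex_gt0 hp i; rewrite /v !mxE mul0r addr0 => pi0.
  by field; rewrite gt_eqF.
have N := near_osimplex_line hp hv.
near=> t.
have ht : osimplex (p + t *: v) by near: t.
by rewrite phi_sum_lnE //; congr (_ + _); apply: eq_bigr => i _; rewrite !mxE.
Unshelve. all: by end_near. Qed.

Lemma sum_ratio_gt0 (p q : vec) : osimplex p -> osimplex q ->
  0 < \sum_(i < n) pi ord0 i * q ord0 i / p ord0 i.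
Proof.
move=> hp hq; rewrite (bigD1 (Ordinal (osimplex_n_gt0 hp))) //=; apply: ltr_wpDr.
  apply: sumr_ge0 => j _; apply: divr_ge0; last exact/ltW/osimplex_gt0.
  by apply: mulr_ge0; exact/ltW/osimplex_gt0.
by apply: divr_gt0; [apply: mulr_gt0|]; exact: osimplex_gt0.
Qed.

Lemma logdiv_crossE (p q : vec) : osimplex p -> osimplex q ->
  logdiv phi q p = ln (\sum_(i < n) pi ord0 i * q ord0 i / p ord0 i) -
     \sum_(i < n) pi ord0 i * ln (q ord0 i / p ord0 i).
Proof.
move=> hp hq; rewrite /logdiv /dirder one_add_derive_cross // !phi_sum_lnE //.
congr (_ - _); rewrite opprD addrACA subrr addr0 -sumrB; apply: eq_bigr => i _.
by rewrite ln_div ?posrE ?osimplex_gt0 // mulrBr.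
Qed.

Lemma logdiv_cross_perturb (p q h : vec) : osimplex p -> osimplex q -> osimplex h ->
  logdiv phi (perturb q h) (perturb p h) = logdiv phi q p.
Proof.
move=> hp hq hh.
have hp' := perturb_osimplex hp hh; have hq' := perturb_osimplex hq hh.
have := dot_gt0 hp hh; have := dot_gt0 hq hh => dq dp.
set r := dot p h / dot q h.
have r0 : 0 < r by exact: divr_gt0.
have ratio i : perturb q h ord0 i / perturb p h ord0 i = q ord0 i / p ord0 i * r.
  rewrite !perturbE /r.
  have := osimplex_gt0 hp i; have := osimplex_gt0 hq i; have := osimplex_gt0 hh i.
  by move=> h0 q0 p0; field; rewrite !gt_eqF.
rewrite !logdiv_crossE //.
have -> : \sum_(i < n) pi ord0 i * perturb q h ord0 i / perturb p h ord0 i =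
    r * \sum_(i < n) pi ord0 i * q ord0 i / p ord0 i.
  by rewrite mulr_sumr; apply: eq_bigr => i _; rewrite -mulrA ratio; ring.
have -> : \sum_(i < n) pi ord0 i * ln (perturb q h ord0 i / perturb p h ord0 i) =
    \sum_(i < n) pi ord0 i * ln (q ord0 i / p ord0 i) + ln r.
  rewrite -[X in _ = _ + X]mul1r -(osimplex_sum hpi) mulr_suml -big_split /=.
  apply: eq_bigr => i _; rewrite ratio lnM ?posrE //; first ring.
  by apply: divr_gt0; exact: osimplex_gt0.
by rewrite lnM ?posrE //; [ring | exact: sum_ratio_gt0].
Qed.

End CrossEntropyPotential.

Local Close Scope classical_set_scope.
Unset Implicit Arguments. Set Strict Implicit. Set Printing Implicit Defensive.

Theorem mainTheorem14 (R : realType) (n : nat) (phi : 'rV[R]_n -> R) :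
  (2 <= n)%N ->
  regular_exp_concave phi ->
  ((forall p q h : 'rV[R]_n, osimplex p -> osimplex q -> osimplex h ->
      logdiv phi (perturb q h) (perturb p h) = logdiv phi q p)
   <->
   (exists (pi : 'rV[R]_n) (c : R), osimplex pi /\
      forall p : 'rV[R]_n, osimplex p ->
        phi p = - cross_entropy pi p + c)).
Proof.
move=> n_gt1 [hcon [[_ [hder _]] hreg]].
have n_gt0 : (0 < n)%N by exact: ltnW.
split=> [hinv|[pi [c [hpi phiE]]]]; last exact: logdiv_cross_perturb hpi phiE.
exists (weights phi), (phi (uniform R n)
  - \sum_(i < n) weights phi ord0 i * ln (uniform R n ord0 i)).
split.
  apply: osimplex_of_pos; last exact: weights_sum.
  by move=> i; exact: weights_gt0.
by move=> p hp; rewrite /cross_entropy opprK; exact: phi_weightsE.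
Qed.
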